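(* Let $R$ be a schematic semi-graded ring and $M$ an LSG $R$-module. Then the module of quotients $Q(M)$, with the semi-graduation described below, is $T$-closed in $\mathsf{LSG}\text{-}R$: for every LSG $R$-module $N$, every SG submodule $N'$ of $N$ with $N/N'$ torsion, and every homogeneous $R$-homomorphism $N'\to Q(M)$, there is a unique homogeneous $R$-homomorphism $N\to Q(M)$ extending it.
   Context: Rings are associative with $1$; modules are left modules. A ring $R$ is semi-graded (SG) if there are additive subgroups $R_n$ ($n\in\mathbb{Z}$) with $R=\bigoplus_n R_n$, $R_mR_n\subseteq\bigoplus_{k\le m+n}R_k$, and $1\in R_0$; positively SG if $R_n=0$ for $n<0$. An $R$-module $M$ is SG if $M=\bigoplus_nM_n$ with $R_mM_n\subseteq\bigoplus_{k\le m+n}M_k$ for $m\ge0$; homomorphisms are homogeneous if they preserve degrees; an SG submodule is a submodule $N$ with $N=\bigoplus_n(N\cap M_n)$. Let $R'_n=\{r\in R_n: rh\in R_{n+m}\ \forall m,\forall h\in R_m\}$, $R''_n=\{r\in R'_n: hr\in R_{n+m}\ \forall m,\forall h\in R_m\}$, $R'=\bigcup R'_n$, $R''=\bigcup R''_n$. $M$ is LSG if $R'_nM_m\subseteq M_{n+m}$ for all $n,m$; $\mathsf{LSG}\text{-}R$ is the category of LSG modules with homogeneous homomorphisms. A left Ore set $S$ is good if $S\subseteq R''$ and for $s\in S$, $r\in R'$ there are $u\in R'$, $v\in S$ with $us=vr$. For positively SG $R$, $R_{\ge t}$ is the intersection of all two-sided ideals that are SG submodules containing $\bigoplus_{k\ge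 t}R_k$. $m\in M$ is torsion if $(R_{\ge t})^nm=0$ for some $n,t\ge0$; $T(M)$ is the set of torsion elements. $R$ is schematic if it is positively SG, left Noetherian, and there is a finite set $I$ of good left Ore sets $S$ with $S\cap\bigoplus_{k\ge1}R_k\ne\emptyset$ such that for each $(x_S)\in\prod_{S\in I}S$ there are $t,m$ with $(R_{\ge t})^m\subseteq\sum_{S\in I}Rx_S$. $Q(M)$ is the module of quotients of $M$ with respect to this torsion theory (Goldman/Gabriel localization): an $R$-module containing $M'=M/T(M)$, $T$-torsion-free and $T$-injective in the category of all $R$-modules, with $Q(M)/M'$ torsion. Its semi-graduation: $\xi\in Q(M)$ is homogeneous of degree $k$ iff there exist $n,t\in\mathbb{N}$ with $(R_{\ge n})^t\xi\subseteq M'$ and, for every homogeneous $s\in(R_{\ge n})^t\cap R'$, $s\xi$ is homogeneous of degree $k+\deg s$ in $M'$ (with $M'$ carrying the semi-graduation of $M/T(M)$); with it $Q(M)$ is an LSG $R$-module. *)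

From HB Require Import structures.
From mathcomp Require Import all_boot all_order all_algebra.
Set Implicit Arguments. Unset Strict Implicit. Unset Printing Implicit Defensive.
Import Order.TTheory GRing.Theory Num.Theory.
Local Open Scope ring_scope.

Section Graded.
Variable V : zmodType.

Definition sumIn (c : int -> Prop) (P : int -> V -> Prop) (x : V) : Prop :=
  exists (s : seq int) (f : int -> V),
    (forall k, k \in s -> c k /\ P k (f k)) /\ x = \sum_(k <- s) f k.

Definition sumLe (P : int -> V -> Prop) (n : int) := sumIn (fun k => k <= n) P.
Definition sumGe (P : int -> V -> Prop) (n : int) := sumIn (fun k => n <= k) P.

Definition directSumDecomp (P : int -> V -> Prop) : Prop :=
  [/\ (forall k, P k 0 /\ (forall x y, P k x -> P k y -> P k (x - y))),
      (forall x, sumIn (fun _ => True) P x) &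
      (forall (s : seq int) (f : int -> V), uniq s ->
          (forall k, k \in s -> P k (f k)) -> \sum_(k <- s) f k = 0 ->
          forall k, k \in s -> f k = 0)].
End Graded.

Section Ring.
Variable R : pzRingType.
Implicit Types (Rg : int -> R -> Prop).

Definition SGring Rg : Prop :=
  [/\ directSumDecomp Rg,
      (forall m n x y, Rg m x -> Rg n y -> sumLe Rg (m + n) (x * y)) & Rg 0 1].

Definition positivelySG Rg : Prop :=
  SGring Rg /\ forall n x, n < 0 -> Rg n x -> x = 0.

Definition Rprime Rg (n : int) (r : R) : Prop :=
  Rg n r /\ forall m h, Rg m h -> Rg (n + m) (r * h).
Definition Rsecond Rg (n : int) (r : R) : Prop :=
  Rprime Rg n r /\ forall m h, Rg m h -> Rg (n + m) (h * r).

Definition leftIdeal (I : R -> Prop) : Prop :=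
  [/\ I 0, (forall x y, I x -> I y -> I (x + y)) & (forall r x, I x -> I (r * x))].
Definition twoSidedIdeal (I : R -> Prop) : Prop :=
  leftIdeal I /\ forall r x, I x -> I (x * r).

Definition leftNoetherian : Prop :=
  forall I, leftIdeal I -> exists (k : nat) (g : 'I_k -> R),
    forall x, I x <-> exists c : 'I_k -> R, x = \sum_(i < k) c i * g i.

Definition prodSet (A B : R -> Prop) (x : R) : Prop :=
  exists s : seq (R * R), (forall p, p \in s -> A p.1 /\ B p.2) /\
                          x = \sum_(p <- s) p.1 * p.2.
Fixpoint idealPow (I : R -> Prop) (k : nat) : R -> Prop :=
  if k is k'.+1 then prodSet (idealPow I k') I else (fun _ => True).

(* R_{>= t}: intersection of all two-sided ideals which are SG submodules of R
   and contain (+)_{k >= t} R_k *)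
Definition Rge Rg (t : int) (x : R) : Prop :=
  forall I : R -> Prop, twoSidedIdeal I ->
    (forall y, I y -> sumIn (fun _ => True) (fun k z => Rg k z /\ I z) y) ->
    (forall y, sumGe Rg t y -> I y) -> I x.

Definition leftOreSet (S : R -> Prop) : Prop :=
  [/\ S 1, ~ S 0, (forall s s', S s -> S s' -> S (s * s')) &
      (forall s r, S s -> exists u v, S v /\ u * s = v * r)].
Definition goodOreSet Rg (S : R -> Prop) : Prop :=
  [/\ leftOreSet S, (forall s, S s -> exists n, Rsecond Rg n s) &
      (forall s r, S s -> (exists n, Rprime Rg n r) ->
         exists u v, (exists n, Rprime Rg n u) /\ S v /\ u * s = v * r)].

Definition schematic Rg : Prop :=
  [/\ positivelySG Rg, leftNoetherian &
    exists (n : nat) (Sf : 'I_n -> R -> Prop),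
      (forall i, goodOreSet Rg (Sf i)) /\
      (forall i, exists x, Sf i x /\ sumGe Rg 1 x) /\
      (forall x : 'I_n -> R, (forall i, Sf i (x i)) ->
         exists (t m : nat), forall r, idealPow (Rge Rg t%:Z) m r ->
           exists c : 'I_n -> R, r = \sum_(i < n) c i * x i)].

Section Modules.
Variable Rg : int -> R -> Prop.

Definition SGmodule (M : lmodType R) (Mg : int -> M -> Prop) : Prop :=
  directSumDecomp Mg /\
  forall (m n : int) r x, 0 <= m -> Rg m r -> Mg n x -> sumLe Mg (m + n) (r *: x).

Definition LSGmodule (M : lmodType R) (Mg : int -> M -> Prop) : Prop :=
  SGmodule Mg /\ forall n m r x, Rprime Rg n r -> Mg m x -> Mg (n + m) (r *: x).

Definition submodule (M : lmodType R) (N : M -> Prop) : Prop :=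
  [/\ N 0, (forall x y, N x -> N y -> N (x + y)) & (forall r x, N x -> N (r *: x))].

Definition SGsubmodule (M : lmodType R) (Mg : int -> M -> Prop) (N : M -> Prop) :=
  submodule N /\
  forall x, N x -> sumIn (fun _ => True) (fun k y => Mg k y /\ N y) x.

Definition torsionMod (M : lmodType R) (N : M -> Prop) (x : M) : Prop :=
  exists (t k : nat), forall r, idealPow (Rge Rg t%:Z) k r -> N (r *: x).

Definition torsion (M : lmodType R) (x : M) : Prop :=
  torsionMod (fun y : M => y = 0) x.

Definition linearOn (N Q : lmodType R) (N' : N -> Prop) (f : N -> Q) : Prop :=
  (forall x y, N' x -> N' y -> f (x + y) = f x + f y) /\
  (forall r x, N' x -> f (r *: x) = r *: f x).

Definition Tinjective (Q : lmodType R) : Prop :=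
  forall (N : lmodType R) (N' : N -> Prop), submodule N' ->
    (forall x, torsionMod N' x) ->
    forall f : N -> Q, linearOn N' f ->
      exists g : {linear N -> Q}, forall x, N' x -> g x = f x.

(* (Q, iota) is the module of quotients Q(M) of M: iota : M -> Q has kernel
   T(M) (so it embeds M' = M/T(M)), Q is T-torsion-free, T-injective, and
   Q / iota(M) is torsion *)
Definition moduleOfQuotients (M Q : lmodType R) (iota : {linear M -> Q}) : Prop :=
  [/\ (forall x, iota x = 0 <-> torsion x),
      (forall xi : Q, torsion xi -> xi = 0),
      Tinjective Q &
      (forall xi : Q, torsionMod (fun y => exists m, y = iota m) xi)].

Definition Qgrad (M Q : lmodType R) (Mg : int -> M -> Prop) (iota : {linear M -> Q})
    (k : int) (xi : Q) : Prop :=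
  exists (n t : nat),
    (forall r, idealPow (Rge Rg n%:Z) t r -> exists m, r *: xi = iota m) /\
    (forall (j : int) s, Rprime Rg j s -> idealPow (Rge Rg n%:Z) t s ->
       exists m, Mg (k + j) m /\ s *: xi = iota m).

Definition homogeneousOn (N Q : lmodType R) (Ng : int -> N -> Prop)
    (Qg : int -> Q -> Prop) (N' : N -> Prop) (f : N -> Q) : Prop :=
  forall n x, N' x -> Ng n x -> Qg n (f x).

Definition TclosedLSG (Q : lmodType R) (Qg : int -> Q -> Prop) : Prop :=
  LSGmodule Qg /\
  forall (N : lmodType R) (Ng : int -> N -> Prop), LSGmodule Ng ->
  forall N' : N -> Prop, SGsubmodule Ng N' -> (forall x, torsionMod N' x) ->
  forall f : N -> Q, linearOn N' f -> homogeneousOn Ng Qg N' f ->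
    exists g : {linear N -> Q},
      [/\ homogeneousOn Ng Qg (fun _ => True) g,
          (forall x, N' x -> g x = f x) &
          (forall h : {linear N -> Q}, homogeneousOn Ng Qg (fun _ => True) h ->
             (forall x, N' x -> h x = f x) -> forall x, h x = g x)].
End Modules.
End Ring.

From mathcomp Require Import all_boot all_order all_algebra.
From mathcomp Require Import zify.
From Stdlib Require Import ClassicalEpsilon Classical FunctionalExtensionality PropExtensionality.
Set Implicit Arguments. Unset Strict Implicit. Unset Printing Implicit Defensive.
Import Order.TTheory GRing.Theory Num.Theory.
Local Open Scope ring_scope.

(* An element of Q(M) is torsion iff every Ore set S_i contains an element killing it, since
   powers of an element a_i of S_i of positive degree lie in any (R_{>=t})^k.  Hence xi has
   degree k for the semi-graduation of Q(M) iff in every chart S_i some homogeneous v in S_i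
   carries xi into iota(M_{k + deg v}).  In this chart-wise form the homogeneous components
   of xi are glued from the components of its numerators by T-injectivity of Q (the Ore
   conditions and the reversibility of Ore sets in a Noetherian ring make the gluing data
   compatible), and the extension of a homogeneous map given by T-injectivity is again
   homogeneous; it is unique because Q is torsion-free. *)

Lemma eq_big_support (I : eqType) (V : nmodType) (F : I -> V) (r s : seq I) :
  uniq r -> uniq s -> (forall k, F k != 0 -> k \in r) -> (forall k, F k != 0 -> k \in s) ->
  \sum_(k <- r) F k = \sum_(k <- s) F k.
Proof.
move=> ur us Fr Fs; apply: perm_big_supp; apply: uniq_perm; rewrite ?filter_uniq //.
by move=> k; rewrite !mem_filter; case: (eqVneq (F k) 0) => //= /[dup] /Fr -> /Fs ->.
Qed.

Section DirectSum.
Variables (V : zmodType) (P : int -> V -> Prop).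
Hypothesis dsP : directSumDecomp P.

Lemma dsum0 k : P k 0.
Proof. by case: dsP => H _ _; case: (H k). Qed.

Lemma dsumB k x y : P k x -> P k y -> P k (x - y).
Proof. by case: dsP => H _ _; case: (H k) => _; apply. Qed.

Lemma dsumN k x : P k x -> P k (- x).
Proof. by move=> Px; rewrite -sub0r; apply: dsumB => //; apply: dsum0. Qed.

Lemma dsumD k x y : P k x -> P k y -> P k (x + y).
Proof. by move=> Px Py; rewrite -[y]opprK; apply: dsumB => //; apply: dsumN. Qed.

Lemma dsum_sum (I : eqType) k (r : seq I) (F : I -> V) :
  (forall i, i \in r -> P k (F i)) -> P k (\sum_(i <- r) F i).
Proof.
elim: r => [|i r IHr] PF; first by rewrite big_nil; apply: dsum0.
rewrite big_cons; apply: dsumD; first by apply: PF; rewrite mem_head.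
by apply: IHr => j jr; apply: PF; rewrite inE jr orbT.
Qed.

Lemma sumIn_uniq (c : int -> Prop) x : sumIn c P x ->
  exists s (f : int -> V),
    [/\ uniq s, forall k, k \in s -> c k /\ P k (f k) & x = \sum_(k <- s) f k].
Proof.
case=> s [f [Pf ->]].
exists (undup s), (fun k => \sum_(j <- s | j == k) f j); split.
- exact: undup_uniq.
- move=> k; rewrite mem_undup => /Pf [ck Pk]; split=> //.
  by rewrite -big_filter; apply: dsum_sum => j; rewrite mem_filter => /andP[/eqP->].
rewrite (exchange_big_dep xpredT) //=; apply: eq_big_seq => j js.
by rewrite -big_filter (eq_filter (_ : _ =1 pred1 j)) ?filter_pred1_uniq ?undup_uniq ?mem_undup
  ?big_seq1 // => k /=; rewrite eq_sym.
Qed.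

Definition decomposition x (g : int -> V) :=
  (forall k, P k (g k)) /\
  exists2 s, uniq s /\ (forall k, g k != 0 -> k \in s) & x = \sum_(k <- s) g k.

Lemma decomposition_sum (s : seq int) (f : int -> V) : uniq s ->
  (forall k, k \in s -> P k (f k)) ->
  decomposition (\sum_(k <- s) f k) (fun k => if k \in s then f k else 0).
Proof.
move=> us Pf; split=> [k|]; first by case: ifP => [/Pf|_] //; apply: dsum0.
exists s; last by apply: eq_big_seq => k ->.
by split=> // k; case: ifP => // _; rewrite eqxx.
Qed.

Lemma decomposition_uniq x g g' : decomposition x g -> decomposition x g' -> g =1 g'.
Proof.
move=> [Pg [s [us gs] Ex]] [Pg' [s' [us' gs'] Ex']] k.
pose B := undup (s ++ s').
have inB t : t \in s \/ t \in s' -> t \in B.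
  by rewrite mem_undup mem_cat => -[] ->; rewrite ?orbT.
have gB t : g t != 0 -> t \in B by move/gs => ?; apply: inB; left.
have gB' t : g' t != 0 -> t \in B by move/gs' => ?; apply: inB; right.
have sum0 : \sum_(t <- B) (g t - g' t) = 0.
  rewrite sumrB (eq_big_support (r := B) (s := s)) ?undup_uniq //.
  by rewrite (eq_big_support (r := B) (s := s')) ?undup_uniq // -Ex -Ex' subrr.
case: dsP => _ _ /(_ B (fun t => g t - g' t) (undup_uniq _)) indep.
case: (boolP (k \in B)) => [kB|kNB].
  by apply/eqP; rewrite -subr_eq0; apply/eqP/indep => // t _; apply: dsumB.
by rewrite (contraNeq (gB k) kNB) (contraNeq (gB' k) kNB).
Qed.

Lemma decomposition_exists x : exists g, decomposition x g.
Proof.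
case: dsP => _ /(_ x) /sumIn_uniq [s [f [us Pf ->]]].
by eexists; apply: decomposition_sum => // k /Pf[].
Qed.

Definition component x : int -> V :=
  epsilon (inhabits (fun _ => 0)) (decomposition x).

Lemma componentP x : decomposition x (component x).
Proof. exact: epsilon_spec (decomposition_exists x). Qed.

Lemma componentE x g : decomposition x g -> forall k, component x k = g k.
Proof. exact: decomposition_uniq (componentP x). Qed.

Lemma component_in x k : P k (component x k).
Proof. by case: (componentP x). Qed.

Lemma sum_component x s : uniq s -> (forall k, component x k != 0 -> k \in s) ->
  x = \sum_(k <- s) component x k.
Proof.
move=> us supp; case: (componentP x) => _ [s' [us' supp'] Ex].
by rewrite {1}Ex; apply: eq_big_support.
Qed.

Lemma component_homog d x k : P d x -> component x k = if k == d then x else 0.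
Proof.
move=> Px; have := componentE (decomposition_sum (f := fun=> x) (s := [:: d]) isT _) k.
by rewrite big_seq1 inE; apply=> t; rewrite inE => /eqP->.
Qed.

Lemma component0 k : component 0 k = 0.
Proof. by rewrite (@component_homog 0 0 k (dsum0 0)) if_same. Qed.

Lemma componentD x y k : component (x + y) k = component x k + component y k.
Proof.
have [_ [s [us supp] _]] := componentP x; have [_ [s' [us' supp'] _]] := componentP y.
apply: (componentE (g := fun t => component x t + component y t)).
split=> [t|]; first by apply: dsumD; apply: component_in.
exists (undup (s ++ s')).
  split=> [|t]; first exact: undup_uniq.
  rewrite mem_undup mem_cat; case: (eqVneq (component x t) 0) => [->|/supp->] //.
  by rewrite add0r => /supp'->; rewrite orbT.
by rewrite big_split -!sum_component ?undup_uniq // => t nz;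
  rewrite mem_undup mem_cat ?(supp _ nz) ?(supp' _ nz) ?orbT.
Qed.

Lemma componentN x k : component (- x) k = - component x k.
Proof. by apply/eqP; rewrite -subr_eq0 opprK -componentD addNr component0. Qed.

Lemma componentB x y k : component (x - y) k = component x k - component y k.
Proof. by rewrite componentD componentN. Qed.

Lemma component_sum (I : Type) (r : seq I) (F : I -> V) k :
  component (\sum_(i <- r) F i) k = \sum_(i <- r) component (F i) k.
Proof. exact: (big_morph (component^~ k) (fun x y => componentD x y k) (component0 k)). Qed.

Lemma dsum_deg_uniq i j x : P i x -> P j x -> x != 0 -> i = j.
Proof.
move=> Pi Pj; have := component_homog i (x := x) Pi.
by rewrite (component_homog i Pj) eqxx; case: eqP => // _ <-; rewrite eqxx.
Qed.

Lemma component_sumLe D x k : sumLe P D x -> D < k -> component x k = 0.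
Proof.
case/sumIn_uniq=> s [f [us Pf ->]] ltDk.
rewrite (componentE (decomposition_sum us (fun t ts => proj2 (Pf t ts)))).
by case: ifP => // /Pf[leD _]; move: ltDk; rewrite ltNge leD.
Qed.

Lemma sumLe_component D x : (forall k, D < k -> component x k = 0) -> sumLe P D x.
Proof.
move=> vanish; case: (componentP x) => Pc [s [us supp] _].
exists [seq k <- s | k <= D], (component x); split.
  by move=> k; rewrite mem_filter => /andP[leD _].
rewrite big_filter big_rmcond_in; first exact: sum_component.
by move=> k _; rewrite -ltNge; apply: vanish.
Qed.

End DirectSum.

Section GradedMaps.
Variables (V W : zmodType) (P : int -> V -> Prop) (P' : int -> W -> Prop).
Hypotheses (dsP : directSumDecomp P) (dsP' : directSumDecomp P').
Variable phi : V -> W.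
Hypothesis phiD : {morph phi : x y / x + y}.

Let phi0 : phi 0 = 0.
Proof. by apply: (addrI (phi 0)); rewrite -phiD !addr0. Qed.

Lemma sumLe_morph D x : (forall k y, P k y -> P' k (phi y)) ->
  sumLe P D x -> sumLe P' D (phi x).
Proof.
move=> phiP [s [f [Pf ->]]]; exists s, (phi \o f); split.
  by move=> k /Pf[leD Pk]; split=> //; apply: phiP.
exact: (big_morph phi phiD phi0).
Qed.

Lemma component_shift q x k : (forall j y, P j y -> P' (j + q) (phi y)) ->
  component P' (phi x) k = phi (component P x (k - q)).
Proof.
move=> phiP; case: (componentP dsP x) => Pc [s [us supp] Ex].
apply: (componentE dsP' (g := fun t => phi (component P x (t - q)))).
split=> [t|]; first by rewrite -{1}(subrK q t); apply: phiP.
exists [seq t + q | t <- s].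
  split=> [|t]; first by rewrite map_inj_uniq // => t t' /addIr.
  case: (eqVneq (component P x (t - q)) 0) => [->|/supp tqs]; first by rewrite phi0 eqxx.
  by move=> _; apply/mapP; exists (t - q); rewrite ?subrK.
by rewrite big_map {1}Ex (big_morph phi phiD phi0); apply: eq_bigr => t _; rewrite addrK.
Qed.

End GradedMaps.

Section HomogeneousElements.
Variables (R : pzRingType) (Rg : int -> R -> Prop).

Lemma Rprime_homog e x : Rprime Rg e x -> Rg e x.
Proof. by case. Qed.

Lemma Rsecond_prime e x : Rsecond Rg e x -> Rprime Rg e x.
Proof. by case. Qed.

Lemma Rprime0 e : directSumDecomp Rg -> Rprime Rg e 0.
Proof. by move=> dsR; split=> [|m h _]; rewrite ?mul0r; apply: dsum0. Qed.

Lemma RprimeM e f x y : Rprime Rg e x -> Rprime Rg f y -> Rprime Rg (e + f) (x * y).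
Proof.
move=> [Rx xR] [Ry yR]; split; first exact: xR.
by move=> m h Rh; rewrite -mulrA -addrA; apply/xR/yR.
Qed.

Lemma RsecondM e f x y : Rsecond Rg e x -> Rsecond Rg f y -> Rsecond Rg (e + f) (x * y).
Proof.
move=> [Px Rx] [Py Ry]; split=> [|m h Rh]; first exact: RprimeM.
by rewrite mulrA (_ : e + f + m = f + (e + m)); [apply/Ry/Rx | lia].
Qed.

Hypothesis Rg1 : Rg 0 1.

Lemma Rprime1 : Rprime Rg 0 1.
Proof. by split=> // m h Rh; rewrite mul1r add0r. Qed.

Lemma Rsecond1 : Rsecond Rg 0 1.
Proof. by split=> [|m h Rh]; [exact: Rprime1 | rewrite mulr1 add0r]. Qed.

Lemma RsecondX e x N : Rsecond Rg e x -> Rsecond Rg (e * N%:Z) (x ^+ N).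
Proof.
move=> Rx; elim: N => [|N IHN]; first by rewrite expr0 mulr0; exact: Rsecond1.
by rewrite exprS -addn1 PoszD mulrDr mulr1 addrC; apply: RsecondM.
Qed.

End HomogeneousElements.

Section IdealPowers.
Variables (R : pzRingType) (Rg : int -> R -> Prop) (t : int).

Lemma Rge_sumGe x : sumGe Rg t x -> Rge Rg t x.
Proof. by move=> tx I _ _; apply. Qed.

Lemma Rge_mulr r x : Rge Rg t x -> Rge Rg t (x * r).
Proof. by move=> tx I HI ISG It; case: (HI) => _ IM; apply: IM; apply: tx. Qed.

Lemma idealPow_mull k r x : idealPow (Rge Rg t) k x -> idealPow (Rge Rg t) k (r * x).
Proof.
elim: k r x => [//|k IHk] r x [s [Hs ->]].
exists [seq (r * p.1, p.2) | p <- s]; split.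
  by move=> _ /mapP[p ps ->] /=; case: (Hs p ps) => kp tp; split=> //; apply: IHk.
by rewrite big_map mulr_sumr; apply: eq_bigr => p _; rewrite mulrA.
Qed.

Lemma idealPow_mulr k r x : idealPow (Rge Rg t) k x -> idealPow (Rge Rg t) k (x * r).
Proof.
case: k => [//|k] [s [Hs ->]].
exists [seq (p.1, p.2 * r) | p <- s]; split.
  by move=> _ /mapP[p ps ->] /=; case: (Hs p ps) => kp tp; split=> //; apply: Rge_mulr.
by rewrite big_map mulr_suml; apply: eq_bigr => p _; rewrite mulrA.
Qed.

Lemma idealPow_exp k x : Rge Rg t x -> idealPow (Rge Rg t) k (x ^+ k).
Proof.
move=> tx; elim: k => [//|k IHk].
by exists [:: (x ^+ k, x)]; rewrite big_seq1 exprSr; split=> // p; rewrite inE => /eqP->.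
Qed.

End IdealPowers.

Section OreSets.
Variables (R : pzRingType) (S : R -> Prop).
Hypothesis oreS : leftOreSet S.

Lemma ore_common_multiple sigma (rs : seq R) : S sigma ->
  exists2 w, S w & forall rho, rho \in rs -> exists a, a * sigma = w * rho.
Proof.
case: oreS => S1 _ SM SO Ssigma.
elim: rs => [|r0 rs [w Sw wP]]; first by exists 1.
have [u [v [Sv uv]]] := SO sigma (w * r0) Ssigma.
exists (v * w); first exact: SM.
move=> rho; rewrite inE => /orP [/eqP ->|rrs]; first by exists u; rewrite uv mulrA.
by have [a aw] := wP _ rrs; exists (v * a); rewrite -mulrA aw mulrA.
Qed.

Hypothesis noethR : leftNoetherian R.

Lemma left_annihilator_chain_stable (c : nat -> R) :
  (forall k, exists t, c k.+1 = c k * t) ->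
  exists J, forall y, y * c J.+1 = 0 -> y * c J = 0.
Proof.
move=> cS; have mono k k' y : (k <= k')%N -> y * c k = 0 -> y * c k' = 0.
  move/subnK <-; elim: (k' - k)%N => [//|j IHj] /IHj yc0.
  by have [t ->] := cS (j + k)%N; rewrite mulrA yc0 mul0r.
pose L y := exists k, y * c k = 0.
have idealL : leftIdeal L.
  split; first by exists 0%N; rewrite mul0r.
    move=> x y [k xk] [k' yk']; exists (maxn k k').
    by rewrite mulrDl (mono k) ?leq_maxl // (mono k') ?leq_maxr // addr0.
  by move=> r x [k xk]; exists k; rewrite -mulrA xk mulr0.
have [K [g genL]] := noethR idealL.
have gL j : exists k, g j * c k = 0.
  apply/genL; exists (fun j' => (j' == j)%:R).
  rewrite (bigD1 j) //= eqxx mul1r big1 ?addr0 // => j' /negPf ->; exact: mul0r.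
have [kg kgP] := fin_all_exists gL.
exists (\max_(j < K) kg j) => y yc0; have [coef ->] := proj1 (genL y) (ex_intro _ _ yc0).
rewrite mulr_suml big1 // => j _; rewrite -mulrA (mono (kg j)) ?mulr0 //.
exact: leq_bigmax.
Qed.

(* Otherwise one builds c_(k+1) = c_k t_k with t_k in S and strictly increasing left
   annihilators, contradicting left Noetherianity. *)
Lemma ore_annihilator_stable :
  exists2 t0, S t0 & forall t y, S t -> y * (t0 * t) = 0 -> y * t0 = 0.
Proof.
case: oreS => S1 _ SM _; apply: NNPP => stable.
pose bad t0 t := S t /\ exists y, y * (t0 * t) = 0 /\ y * t0 <> 0.
have badP t0 : S t0 -> exists t, bad t0 t.
  move=> St0; apply: NNPP => nobad; apply: stable; exists t0 => // t y St ytt0.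
  by apply: NNPP => yt0; apply: nobad; exists t; split=> //; exists y.
pose next t0 := t0 * epsilon (inhabits 1) (bad t0).
have nextP t0 : S t0 -> bad t0 (epsilon (inhabits 1) (bad t0)).
  by move/badP; apply: epsilon_spec.
pose c k := iter k next 1.
have Sc k : S (c k) by elim: k => [|k IHk] //=; apply/SM/(proj1 (nextP _ IHk)).
have [J stableJ] : exists J, forall y, y * c J.+1 = 0 -> y * c J = 0.
  by apply: left_annihilator_chain_stable => k; eexists.
have [_ [y [yc yc0]]] := nextP _ (Sc J).
by apply: yc0; apply: stableJ; exact: yc.
Qed.

Lemma ore_reversible r s : S s -> r * s = 0 -> exists2 s', S s' & s' * r = 0.
Proof.
move=> Ss rs0; have [t0 St0 stable] := ore_annihilator_stable.
case: oreS => _ _ _ /(_ t0 r St0) [u [v [Sv uv]]].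
exists v => //; rewrite -uv; apply: (stable s) => //.
by rewrite mulrA uv -mulrA rs0 mulr0.
Qed.

End OreSets.

Section GoodOreSets.
Variables (R : pzRingType) (Rg : int -> R -> Prop) (S : R -> Prop).
Hypothesis goodS : goodOreSet Rg S.

Lemma good_ore_set : leftOreSet S.
Proof. by case: goodS. Qed.

Lemma good1 : S 1.
Proof. by case: good_ore_set. Qed.

Lemma goodM s s' : S s -> S s' -> S (s * s').
Proof. by case: good_ore_set => _ _ SM _; apply: SM. Qed.

Lemma goodX s N : S s -> S (s ^+ N).
Proof.
move=> Ss; elim: N => [|N IHN]; first by rewrite expr0; exact: good1.
by rewrite exprS; apply: goodM.
Qed.

Lemma good_homog s : S s -> exists e, Rsecond Rg e s.
Proof. by case: goodS => _ homS _; apply: homS. Qed.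

Lemma good_ore s r : S s -> exists u v, S v /\ u * s = v * r.
Proof. by case: good_ore_set => _ _ _; apply. Qed.

Lemma good_ore_homog s r p : S s -> Rprime Rg p r ->
  exists q u v, [/\ Rprime Rg q u, S v & u * s = v * r].
Proof.
case: goodS => _ _ oreH Ss Pr; have [u [v [[q Pu] [Sv usvr]]]] := oreH s r Ss (ex_intro _ p Pr).
by exists q, u, v.
Qed.

Lemma good_common_multiple_homog sigma (rs : seq R) : S sigma ->
  (forall rho, rho \in rs -> exists k, Rprime Rg k rho) ->
  exists2 y, S y & forall rho, rho \in rs ->
    exists b, (exists k, Rprime Rg k b) /\ b * sigma = y * rho.
Proof.
move=> Ssigma; elim: rs => [|r0 rs IHrs] homrs; first by exists 1 => //; exact: good1.
have [y Sy yP] := IHrs (fun rho rrs => homrs rho (mem_behead (s := r0 :: rs) rrs)).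
have [ey Py] := good_homog Sy; have [k0 Pr0] := homrs r0 (mem_head _ _).
have [q [u [v [Pu Sv uv]]]] := good_ore_homog Ssigma (RprimeM (Rsecond_prime Py) Pr0).
have [ev Pv] := good_homog Sv.
exists (v * y); first exact: goodM.
move=> rho; rewrite inE => /orP [/eqP ->|rrs].
  by exists u; rewrite uv mulrA; split=> //; exists q.
have [b [[kb Pb] bP]] := yP _ rrs; exists (v * b); split; last by rewrite -mulrA bP mulrA.
by exists (ev + kb); apply: RprimeM (Rsecond_prime Pv) Pb.
Qed.

Lemma good_sumGe1_homog x : directSumDecomp Rg -> S x -> sumGe Rg 1 x ->
  exists2 d : nat, (0 < d)%N & Rsecond Rg d%:Z x.
Proof.
move=> dsR Sx [s [f [Pf Ex]]]; have [e Px] := good_homog Sx.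
have xx := component_homog dsR e (Rprime_homog (Rsecond_prime Px)); rewrite eqxx in xx.
case: (lerP 1 e) => [le1e|lte1].
  by exists `|e|%N; [lia | rewrite gez0_abs ?(le_trans _ le1e)].
suff x0 : x = 0 by case: good_ore_set => _ S0 _ _; move: Sx; rewrite x0.
rewrite -xx {1}Ex (component_sum dsR) big1_seq // => k ks; have [le1k Pk] := Pf k ks.
by rewrite (component_homog dsR e Pk); case: eqP => // ek; move: lte1; rewrite ek ltNge le1k.
Qed.

End GoodOreSets.

Section ModuleOfQuotients.
Variables (R : pzRingType) (Rg : int -> R -> Prop).
Hypotheses (dsR : directSumDecomp Rg) (Rg1 : Rg 0 1).
Hypothesis Rg_pos : forall k x, k < 0 -> Rg k x -> x = 0.
Hypothesis noethR : leftNoetherian R.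
Variables (n : nat) (S : 'I_n -> R -> Prop).
Hypothesis goodS : forall i, goodOreSet Rg (S i).
Hypothesis S_cover : forall x : 'I_n -> R, (forall i, S i (x i)) ->
  exists t m : nat, forall r, idealPow (Rge Rg t%:Z) m r ->
    exists c : 'I_n -> R, r = \sum_(i < n) c i * x i.
(* a i is the element of S i of positive degree d i granted by the schematic hypothesis. *)
Variables (a : 'I_n -> R) (d : 'I_n -> nat).
Hypotheses (Sa : forall i, S i (a i)) (homog_a : forall i, Rsecond Rg (d i)%:Z (a i)).
Hypothesis d_gt0 : forall i, (0 < d i)%N.

Lemma homog_aX i N : Rsecond Rg ((d i)%:Z * N%:Z) (a i ^+ N).
Proof. exact: RsecondX. Qed.

Lemma idealPow_aX i (t k N : nat) : (t * k <= N)%N -> idealPow (Rge Rg t%:Z) k (a i ^+ N).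
Proof.
move=> leN; rewrite -(subnK leN) exprD; apply: idealPow_mull; rewrite exprM.
apply: idealPow_exp; apply: Rge_sumGe; exists [:: (d i)%:Z * t%:Z], (fun=> a i ^+ t); split.
  move=> _ /[1!inE] /eqP->; split; last exact: Rprime_homog (Rsecond_prime (homog_aX i t)).
  by rewrite -PoszM lez_nat leq_pmull.
by rewrite big_seq1.
Qed.

Definition Storsion (X : lmodType R) (z : X) := forall i, exists2 w, S i w & w *: z = 0.

Lemma torsionP (X : lmodType R) (z : X) : torsion Rg z <-> Storsion z.
Proof.
split=> [[t [k tz]] i|Sz].
  by exists (a i ^+ (t * k)); [apply: goodX | apply/tz/idealPow_aX].
have /fin_all_exists [w wP] : forall i, exists w, S i w /\ w *: z = 0.
  by move=> i; have [w] := Sz i; exists w.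
have [t [k cover]] := S_cover (fun i => proj1 (wP i)); exists t, k => r /cover [c ->].
by rewrite scaler_suml big1 // => i _; rewrite -scalerA (proj2 (wP i)) scaler0.
Qed.

Section StorsionSubmodule.
Variable X : lmodType R.

Lemma Storsion0 : Storsion (0 : X).
Proof. by move=> i; exists 1; [exact: good1 | rewrite scaler0]. Qed.

Lemma StorsionZ r (z : X) : Storsion z -> Storsion (r *: z).
Proof.
move=> Sz i; have [w Sw wz] := Sz i; have [u [v [Sv uwvr]]] := good_ore (goodS i) r Sw.
by exists v => //; rewrite scalerA -uwvr -scalerA wz scaler0.
Qed.

Lemma StorsionD (z z' : X) : Storsion z -> Storsion z' -> Storsion (z + z').
Proof.
move=> Sz Sz' i; have [w Sw wz] := Sz i; have [w' Sw' wz'] := StorsionZ w Sz' i.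
by exists (w' * w); [apply: goodM | rewrite scalerDr -!scalerA wz wz' !scaler0 addr0].
Qed.

Lemma Storsion_ann i w (z : X) : S i w -> Storsion (w *: z) -> exists2 w', S i w' & w' *: z = 0.
Proof.
by move=> Sw /(_ i) [w' Sw' wz]; exists (w' * w); [apply: goodM | rewrite -scalerA].
Qed.

End StorsionSubmodule.

Variables (M : lmodType R) (Mg : int -> M -> Prop) (Q : lmodType R) (iota : {linear M -> Q}).
Hypotheses (lsgM : LSGmodule Rg Mg) (quotQ : moduleOfQuotients Rg iota).

Let dsM : directSumDecomp Mg.
Proof. by case: lsgM => [[]]. Qed.

Let injQ : Tinjective Rg Q.
Proof. by case: quotQ. Qed.

Lemma MgZ e v k m : Rprime Rg e v -> Mg k m -> Mg (e + k) (v *: m).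
Proof. by case: lsgM => _; apply. Qed.

Lemma componentZ e v m k : Rprime Rg e v ->
  component Mg (v *: m) k = v *: component Mg m (k - e).
Proof.
move=> Pv; apply: (component_shift dsM dsM (scalerDr v)) => t y.
by rewrite addrC; apply: MgZ.
Qed.

Lemma Storsion_component m k : Storsion m -> Storsion (component Mg m k).
Proof.
move=> Sm i; have [w Sw wm] := Sm i; have [e Pw] := good_homog (goodS i) Sw.
exists w => //; have := componentZ m (k + e) (Rsecond_prime Pw).
by rewrite addrK wm (component0 dsM).
Qed.

Lemma iota_eq0 m : iota m = 0 <-> Storsion m.
Proof. by case: quotQ => ker _ _ _; rewrite ker; apply: torsionP. Qed.

Lemma iota_eq m m' : iota m = iota m' <-> Storsion (m - m').
Proof.
split=> [mm'|/iota_eq0]; first by apply/iota_eq0; rewrite linearB mm' subrr.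
by rewrite linearB => /eqP; rewrite subr_eq0 => /eqP.
Qed.

Lemma Storsion_Q_eq0 (xi : Q) : Storsion xi -> xi = 0.
Proof. by case: quotQ => _ tfree _ _ Sxi; apply: tfree; apply/torsionP. Qed.

Lemma iota_denominator (xi : Q) : exists t k : nat,
  forall r, idealPow (Rge Rg t%:Z) k r -> exists m, r *: xi = iota m.
Proof.
case: quotQ => _ _ _ /(_ xi) [t [k den]]; exists t, k => r /den [m ->].
by exists m.
Qed.

Lemma iota_scale_component e e' v v' m m' D D' :
  Rprime Rg e v -> Rprime Rg e' v' -> e + D = e' + D' ->
  iota (v *: m) = iota (v' *: m') ->
  iota (v *: component Mg m D) = iota (v' *: component Mg m' D').
Proof.
move=> Pv Pv' eD /iota_eq /(Storsion_component (e + D)).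
rewrite (componentB dsM) (componentZ _ _ Pv) (componentZ _ _ Pv').
have -> : e + D - e = D by lia.
have -> : e + D - e' = D' by lia.
by move/iota_eq.
Qed.

Lemma iota_scale_component0 e v m D : Rprime Rg e v -> iota (v *: m) = 0 ->
  iota (v *: component Mg m D) = 0.
Proof.
move=> Pv vm0; have := iota_scale_component (m' := m) Pv (Rprime0 e dsR) (erefl (e + D)).
by rewrite !scale0r linear0; apply.
Qed.

Lemma iota_component_compatible (xi : Q) e e' f f' v v' u u' m m' k :
  Rprime Rg e v -> Rprime Rg e' v' -> Rprime Rg f u -> Rprime Rg f' u' ->
  v * u = v' * u' -> u *: xi = iota m -> u' *: xi = iota m' ->
  iota (v *: component Mg m (k + f)) = iota (v' *: component Mg m' (k + f')).
Proof.
move=> Pv Pv' Pu Pu' vu um um'.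
have vm : iota (v *: m) = iota (v' *: m') by rewrite !linearZZ -um -um' !scalerA vu.
have [vu0|vu_neq0] := eqVneq (v * u) 0.
  have vm0 : iota (v *: m) = 0 by rewrite linearZZ -um scalerA vu0 scale0r.
  by rewrite !(iota_scale_component0 _ Pv, iota_scale_component0 _ Pv') // -vm.
have Rvu : Rg (e + f) (v * u) := Rprime_homog (RprimeM Pv Pu).
have Rvu' : Rg (e' + f') (v * u) by rewrite vu; exact: Rprime_homog (RprimeM Pv' Pu').
have ef := dsum_deg_uniq dsR Rvu Rvu' vu_neq0.
by apply: (iota_scale_component Pv Pv' _ vm); lia.
Qed.

(* Chart-wise description of the semi-graduation Qgrad of Q(M); see Qgrad_Qhomog_eq. *)
Definition Qhomog (k : int) (xi : Q) := forall i, exists v e m,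
  [/\ S i v, Rsecond Rg e v, Mg (k + e) m & v *: xi = iota m].

Lemma Qhomog_iota k m : Mg k m -> Qhomog k (iota m).
Proof.
move=> Mm i; exists 1, 0, m; rewrite addr0 scale1r; split=> //.
  exact: good1.
exact: Rsecond1.
Qed.

Lemma QhomogZ p k r xi : Rprime Rg p r -> Qhomog k xi -> Qhomog (p + k) (r *: xi).
Proof.
move=> Pr homxi i; have [v [e [m [Sv Pv Mm vxi]]]] := homxi i.
have [q [u [v' [Pu Sv' uvv'r]]]] := good_ore_homog (goodS i) Sv Pr.
have [e' Pv'] := good_homog (goodS i) Sv'.
exists v', e'; have [uv0|uv_neq0] := eqVneq (u * v) 0.
  exists 0; split=> //; first exact: dsum0.
  by rewrite linear0 scalerA -uvv'r uv0 scale0r.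
exists (u *: m); split=> //; last by rewrite scalerA -uvv'r -scalerA vxi linearZZ.
have Ruv : Rg (q + e) (u * v) := Rprime_homog (RprimeM Pu (Rsecond_prime Pv)).
have Ruv' : Rg (e' + p) (u * v).
  by rewrite uvv'r; exact: Rprime_homog (RprimeM (Rsecond_prime Pv') Pr).
have qe := dsum_deg_uniq dsR Ruv Ruv' uv_neq0.
by rewrite (_ : p + k + e' = q + (k + e)); [apply: MgZ | lia].
Qed.

Lemma Qhomog_iota_component D m : Qhomog D (iota m) -> iota m = iota (component Mg m D).
Proof.
move=> homm; apply/iota_eq => i; have [v [e [m' [Sv Pv Mm' vm]]]] := homm i.
have v11 : 1 * v = v * 1 by rewrite mul1r mulr1.
have := iota_component_compatible D (Rprime1 Rg1) (Rsecond_prime Pv)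
  (Rsecond_prime Pv) (Rprime1 Rg1) v11 vm (scale1r _).
rewrite addr0 scale1r (component_homog dsM _ Mm') eqxx -vm -linearZZ => /iota_eq.
by rewrite -scalerBr; apply: Storsion_ann Sv.
Qed.

Lemma Qhomog_Qgrad k xi : Qhomog k xi -> Qgrad Rg Mg iota k xi.
Proof.
move=> homxi; have [t [t' den]] := iota_denominator xi; exists t, t'; split=> // j s Ps Is.
have [m0 sxi] := den _ Is; exists (component Mg m0 (k + j)); split.
  exact: component_in.
by rewrite sxi; apply: Qhomog_iota_component; rewrite -sxi addrC; apply: QhomogZ.
Qed.

Lemma Qgrad_Qhomog k xi : Qgrad Rg Mg iota k xi -> Qhomog k xi.
Proof.
move=> [t [t' [_ homQ]]] i; have Is := idealPow_aX i (leqnn (t * t')).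
have [m [Mm aNxi]] := homQ _ _ (Rsecond_prime (homog_aX i (t * t'))) Is.
by exists (a i ^+ (t * t')), ((d i)%:Z * (t * t')%N%:Z), m; split=> //;
  [apply: goodX | apply: homog_aX].
Qed.

Lemma Qgrad_Qhomog_eq : Qgrad Rg Mg iota = Qhomog.
Proof.
apply: functional_extensionality => k; apply: functional_extensionality => xi.
by apply: propositional_extensionality; split; [apply: Qgrad_Qhomog | apply: Qhomog_Qgrad].
Qed.

Lemma Qhomog_aX k xi i : Qhomog k xi -> exists N0, forall N, (N0 <= N)%N ->
  exists2 m, Mg (k + (d i)%:Z * N%:Z) m & a i ^+ N *: xi = iota m.
Proof.
move=> /Qhomog_Qgrad [t [t' [_ homQ]]]; exists (t * t')%N => N leN.
by have [m [Mm aNxi]] := homQ _ _ (Rsecond_prime (homog_aX i N)) (idealPow_aX i leN); exists m.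
Qed.

Lemma Qhomog_aX_seq (s : seq int) (f : int -> Q) i :
  (forall k, k \in s -> Qhomog k (f k)) -> exists N0, forall N, (N0 <= N)%N ->
  forall k, k \in s -> exists2 m, Mg (k + (d i)%:Z * N%:Z) m & a i ^+ N *: f k = iota m.
Proof.
elim: s => [|k0 s IHs] homf; first by exists 0%N.
have [N0 N0P] := Qhomog_aX i (homf k0 (mem_head _ _)).
have [N1 N1P] := IHs (fun k ks => homf k (mem_behead (s := k0 :: s) ks)).
exists (maxn N0 N1) => N; rewrite geq_max => /andP[le0 le1] k.
by rewrite inE => /predU1P [->|]; [apply: N0P | apply: N1P].
Qed.

Lemma Qhomog0 k : Qhomog k 0.
Proof. by rewrite -(linear0 iota); apply: Qhomog_iota; apply: dsum0. Qed.

Lemma QhomogB k xi xi' : Qhomog k xi -> Qhomog k xi' -> Qhomog k (xi - xi').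
Proof.
move=> /Qhomog_aX homxi /Qhomog_aX homxi' i.
have [N0 N0P] := homxi i; have [N1 N1P] := homxi' i; pose N := maxn N0 N1.
have [m Mm aNxi] := N0P N (leq_maxl _ _); have [m' Mm' aNxi'] := N1P N (leq_maxr _ _).
exists (a i ^+ N), ((d i)%:Z * N%:Z), (m - m'); split.
- exact: goodX.
- exact: homog_aX.
- exact: dsumB.
- by rewrite scalerBr aNxi aNxi' linearB.
Qed.

Lemma Qhomog_direct (s : seq int) (f : int -> Q) : uniq s ->
  (forall k, k \in s -> Qhomog k (f k)) -> \sum_(k <- s) f k = 0 ->
  forall k, k \in s -> f k = 0.
Proof.
move=> us homf sum0 k0 k0s; apply: Storsion_Q_eq0 => i.
have [N /(_ N (leqnn N)) NP] := Qhomog_aX_seq i homf.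
pose gspec k m := Mg (k + (d i)%:Z * N%:Z) m /\ a i ^+ N *: f k = iota m.
pose g k := epsilon (inhabits 0) (gspec k).
have gP k : k \in s -> gspec k (g k).
  by move/NP => [m Mm aNf]; apply: (epsilon_spec _ (gspec k)); exists m.
exists (a i ^+ N); first exact: goodX.
have /(Storsion_component (k0 + (d i)%:Z * N%:Z)) : Storsion (\sum_(k <- s) g k).
  apply/iota_eq0; rewrite linear_sum -(eq_big_seq _ (fun k ks => proj2 (gP k ks))).
  by rewrite -scaler_sumr sum0 scaler0.
rewrite (component_sum dsM) (eq_big_seq (fun k => if k == k0 then g k else 0)).
  rewrite -big_mkcond -big_filter filter_pred1_uniq // big_seq1.
  by rewrite (proj2 (gP _ k0s)) => /iota_eq0.
move=> k ks; rewrite (component_homog dsM _ (proj1 (gP _ ks))).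
by rewrite (inj_eq (addIr _)) eq_sym.
Qed.

Definition lincomb (u : 'I_n -> R) (r : R^o) := exists c : 'I_n -> R, r = \sum_l c l * u l.

Lemma lincomb_submodule u : submodule (lincomb u).
Proof.
split.
- by exists (fun=> 0); rewrite big1 // => l _; rewrite mul0r.
- move=> _ _ [c ->] [c' ->]; exists (fun l => c l + c' l).
  by rewrite -big_split; apply: eq_bigr => l _; rewrite mulrDl.
- move=> r _ [c ->]; exists (fun l => r * c l).
  by rewrite [LHS]mulr_sumr; apply: eq_bigr => l _; rewrite mulrA.
Qed.

Lemma lincomb_torsion u : (forall l, S l (u l)) -> forall r, torsionMod Rg (lincomb u) r.
Proof.
move=> Su r; have [t [k cover]] := S_cover Su.
by exists t, k => s /(idealPow_mulr r) /cover.
Qed.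

(* T-injectivity applied to the left ideal spanned by the u l, which is co-torsion by the
   covering condition on the S i. *)
Lemma Q_glue (u : 'I_n -> R) (y : 'I_n -> Q) : (forall l, S l (u l)) ->
  (forall c, \sum_l c l * u l = 0 -> \sum_l c l *: y l = 0) ->
  exists zeta : Q, forall l, u l *: zeta = y l.
Proof.
move=> Su compat.
pose coefs (r : R^o) (c : 'I_n -> R) := r = \sum_l c l * u l.
pose coef (r : R^o) := epsilon (inhabits (fun=> 0)) (coefs r).
pose f (r : R^o) := \sum_l coef r l *: y l.
have fE (r : R^o) c : r = \sum_l c l * u l -> f r = \sum_l c l *: y l.
  move=> rc; have rcoef : coefs r (coef r) by apply: epsilon_spec; exists c.
  apply/eqP; rewrite -subr_eq0 -sumrB.
  under eq_bigr do rewrite -scalerBl.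
  apply/eqP/compat; under eq_bigr do rewrite mulrBl.
  by rewrite sumrB -rcoef -rc subrr.
have linf : linearOn (lincomb u) f.
  split=> [_ _ [c ->] [c' ->]|r _ [c ->]].
    rewrite -big_split !(fE _ _ (erefl _)) (fE _ (fun l => c l + c' l)).
      by rewrite -big_split; apply: eq_bigr => l _; rewrite scalerDl.
    by apply: eq_bigr => l _; rewrite mulrDl.
  rewrite (fE _ _ (erefl _)) (fE _ (fun l => r * c l)).
    by rewrite scaler_sumr; apply: eq_bigr => l _; rewrite scalerA.
  by rewrite [LHS]mulr_sumr; apply: eq_bigr => l _; rewrite mulrA.
have [g gf] := injQ (lincomb_submodule u) (lincomb_torsion Su) linf.
have delta l : u l = \sum_j (j == l)%:R * u j.
  by rewrite (bigD1 l) //= eqxx mul1r big1 ?addr0 // => j /negPf->; rewrite mul0r.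
exists (g 1) => l.
have -> : u l *: g 1 = g (u l) by rewrite -linearZZ; congr (g _); exact: mulr1.
rewrite gf; last by exists (fun j => (j == l)%:R).
rewrite (fE _ _ (delta l)) (bigD1 l) //= eqxx scale1r big1 ?addr0 //.
by move=> j /negPf->; rewrite scale0r.
Qed.

Lemma components_compatible (xi : Q) (u : 'I_n -> R) (eu : 'I_n -> int) (m : 'I_n -> M)
    k :
  (forall l, S l (u l)) -> (forall l, Rsecond Rg (eu l) (u l)) ->
  (forall l, u l *: xi = iota (m l)) ->
  forall c, \sum_l c l * u l = 0 -> \sum_l c l *: iota (component Mg (m l) (k + eu l)) = 0.
Proof.
move=> Su Pu um c cu0; apply: Storsion_Q_eq0 => p.
(* In the chart p, all the u l are brought to the common denominator y * u p. *)
pose cm l := component Mg (m l) (k + eu l).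
have homup rho : rho \in [seq u p * u l | l <- enum 'I_n] -> exists q, Rprime Rg q rho.
  by case/mapP=> l _ ->; eexists; apply: RprimeM (Rsecond_prime (Pu p)) (Rsecond_prime (Pu l)).
have [y Sy yP] := good_common_multiple_homog (goodS p) (Su p) homup.
have /fin_all_exists [b bP] : forall l, exists b,
    (exists q, Rprime Rg q b) /\ b * u p = y * (u p * u l).
  by move=> l; apply: yP; apply: map_f; rewrite mem_enum.
have [ey Py] := good_homog (goodS p) Sy.
pose Y := y * u p.
have [w Sw wP] := ore_common_multiple (good_ore_set (goodS p)) [seq c l | l <- enum 'I_n]
  (goodM (goodS p) Sy (Su p)).
have /fin_all_exists [a' a'P] : forall l, exists a', a' * Y = w * c l.
  by move=> l; apply: wP; apply: map_f; rewrite mem_enum.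
have Ycm l : iota (Y *: cm l) = iota (b l *: cm p).
  have [[q Pb] bup] := bP l.
  apply: iota_component_compatible (Rsecond_prime (RsecondM Py (Pu p))) Pb
    (Rsecond_prime (Pu l)) (Rsecond_prime (Pu p)) _ (um l) (um p).
  by rewrite bup mulrA.
have wsum : w *: \sum_l c l *: iota (cm l) = (\sum_l a' l * b l) *: iota (cm p).
  rewrite scaler_sumr scaler_suml; apply: eq_bigr => l _.
  by rewrite scalerA -a'P -scalerA -linearZZ Ycm linearZZ scalerA.
have abu0 : (\sum_l a' l * b l) * u p = 0.
  rewrite mulr_suml (eq_bigr (fun l => w * (c l * u l))) => [|l _].
    by rewrite -mulr_sumr cu0 mulr0.
  by rewrite -mulrA (proj2 (bP l)) (mulrA y) -/Y mulrA a'P -mulrA.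
have [s' Ss' s'ab] := ore_reversible (good_ore_set (goodS p)) noethR (Su p) abu0.
exists (s' * w); first exact: goodM.
by rewrite -scalerA wsum scalerA s'ab scale0r.
Qed.

Lemma Qhomog_cover xi : sumIn (fun=> True) Qhomog xi.
Proof.
have [t [t' den]] := iota_denominator xi.
pose u l := a l ^+ (t * t'); pose eu l := (d l)%:Z * (t * t')%N%:Z.
have Su l : S l (u l) := goodX (goodS l) _ (Sa l).
have Pu l : Rsecond Rg (eu l) (u l) := homog_aX l (t * t').
have /fin_all_exists [m um] : forall l, exists m, u l *: xi = iota m.
  by move=> l; apply/den/idealPow_aX.
have /fin_all_exists [supp suppP] : forall l,
    exists s, uniq s /\ forall k, component Mg (m l) k != 0 -> k \in s.
  by move=> l; case: (componentP dsM (m l)) => _ [s]; exists s.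
pose K := undup (flatten [seq [seq k - eu l | k <- supp l] | l <- enum 'I_n]).
pose zspec k zeta := forall l, u l *: zeta = iota (component Mg (m l) (k + eu l)).
pose zeta k := epsilon (inhabits 0) (zspec k).
have zetaP k : zspec k (zeta k).
  by apply: (epsilon_spec _ (zspec k)); exact: Q_glue Su (components_compatible k Su Pu um).
exists K, zeta; split.
  move=> k _; split=> // l; exists (u l), (eu l), (component Mg (m l) (k + eu l)).
  by split=> //; [exact: (component_in dsM) | exact: zetaP].
apply/eqP; rewrite -subr_eq0; apply/eqP/Storsion_Q_eq0 => l; exists (u l) => //.
rewrite scalerBr scaler_sumr (eq_bigr _ (fun k _ => zetaP k l)) -linear_sum um -linearB.
rewrite -(big_map (fun k => k + eu l) xpredT (component Mg (m l))).
rewrite -sum_component ?subrr ?linear0 //.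
  by rewrite map_inj_uniq ?undup_uniq // => k k' /addIr.
move=> k /(proj2 (suppP l)) ksupp; apply/mapP; exists (k - eu l); rewrite ?subrK //.
rewrite mem_undup; apply/flattenP; exists [seq k - eu l | k <- supp l]; last exact: map_f.
by apply: map_f; rewrite mem_enum.
Qed.

Lemma Qhomog_dsum : directSumDecomp Qhomog.
Proof.
split; [|exact: Qhomog_cover|exact: Qhomog_direct].
by move=> k; split; [apply: Qhomog0 | apply: QhomogB].
Qed.

Let sgM p k r m : 0 <= p -> Rg p r -> Mg k m -> sumLe Mg (p + k) (r *: m).
Proof. by case: lsgM => [[_ sg] _]; apply: sg. Qed.

Lemma component_mulr e w x k : Rsecond Rg e w ->
  component Rg (x * w) k = component Rg x (k - e) * w.
Proof.
case=> _ Pw; apply: (component_shift dsR dsR (fun x y => mulrDl x y w)) => t y Ry.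
by rewrite addrC; apply: Pw.
Qed.

Lemma Qhomog_scale_sumLe p k r xi : 0 <= p -> Rg p r -> Qhomog k xi ->
  forall i, exists v e m,
    [/\ S i v, Rsecond Rg e v, sumLe Mg (e + (p + k)) m & v *: (r *: xi) = iota m].
Proof.
move=> p0 Rr /Qhomog_aX homxi i; have [N /(_ N (leqnn N)) [b Mb aNxi]] := homxi i.
have [u [v [Sv uavr]]] := good_ore (goodS i) r (goodX (goodS i) N (Sa i)).
have [e Pv] := good_homog (goodS i) Sv.
have Rvr : Rg (e + p) (v * r) by case: Pv => [[_ Pv] _]; apply: Pv.
pose u' := component Rg u (e + p - (d i)%:Z * N%:Z).
have u'a : u' * a i ^+ N = v * r.
  rewrite /u' -(component_mulr u (e + p) (homog_aX i N)) uavr.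
  by rewrite (component_homog dsR _ Rvr) eqxx.
exists v, e, (u' *: b); split=> //; last by rewrite scalerA -u'a -scalerA aNxi linearZZ.
have [ge0|lt0] := lerP 0 (e + p - (d i)%:Z * N%:Z).
  have := sgM ge0 (component_in dsR u _) Mb.
  by rewrite (_ : _ + (k + _) = e + (p + k)) //; lia.
rewrite /u' (Rg_pos lt0 (component_in dsR u _)) scale0r.
by exists [::], (fun=> 0); rewrite big_nil.
Qed.

Lemma QhomogZ_sumLe p k r xi : 0 <= p -> Rg p r -> Qhomog k xi ->
  sumLe Qhomog (p + k) (r *: xi).
Proof.
move=> p0 Rr homxi; apply: (sumLe_component Qhomog_dsum) => j ltj.
apply: Storsion_Q_eq0 => i; have [v [e [m [Sv Pv Mm vrxi]]]] := Qhomog_scale_sumLe p0 Rr homxi i.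
exists v => //; have vQ t y : Qhomog t y -> Qhomog (t + e) (v *: y).
  by rewrite addrC; apply: QhomogZ (Rsecond_prime Pv).
rewrite -[j](addrK e) -(component_shift Qhomog_dsum Qhomog_dsum (scalerDr v) _ _ vQ) vrxi.
apply: (component_sumLe Qhomog_dsum (sumLe_morph (raddfD iota) (@Qhomog_iota) Mm)).
by rewrite addrC ltrD2r.
Qed.

Section Extension.
Variables (X : lmodType R) (Xg : int -> X -> Prop) (X' : X -> Prop).
Hypotheses (lsgX : LSGmodule Rg Xg) (torX : forall x, torsionMod Rg X' x).

Lemma extension_homogeneous (f : X -> Q) (g : {linear X -> Q}) :
  homogeneousOn Xg Qhomog X' f -> (forall x, X' x -> g x = f x) ->
  homogeneousOn Xg Qhomog (fun=> True) g.
Proof.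
move=> homf gf k x _ Xx i; have [t [t' tx]] := torX x; pose N := (t * t')%N.
have X'ax : X' (a i ^+ N *: x) := tx _ (idealPow_aX i (leqnn N)).
have Xax : Xg ((d i)%:Z * N%:Z + k) (a i ^+ N *: x).
  by case: lsgX => _; apply; [exact: Rsecond_prime (homog_aX i N) | exact: Xx].
have [v [e [m [Sv Pv Mm vfax]]]] := homf _ _ X'ax Xax i.
exists (v * a i ^+ N), (e + (d i)%:Z * N%:Z), m; split.
- exact: (goodM (goodS i) Sv (goodX (goodS i) N (Sa i))).
- exact: RsecondM Pv (homog_aX i N).
- by rewrite (_ : k + (e + (d i)%:Z * N%:Z) = (d i)%:Z * N%:Z + k + e) //; lia.
- by rewrite -scalerA -linearZZ gf.
Qed.

Lemma extension_unique (g h : {linear X -> Q}) :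
  (forall x, X' x -> h x = g x) -> forall x, h x = g x.
Proof.
move=> hg x; apply/eqP; rewrite -subr_eq0; apply/eqP.
case: quotQ => _ tfree _ _; apply: tfree; have [t [k tx]] := torX x.
by exists t, k => r /tx X'rx; rewrite scalerBr -!linearZZ hg ?subrr.
Qed.

End Extension.

Lemma Qgrad_Tclosed : TclosedLSG Rg (Qgrad Rg Mg iota).
Proof.
rewrite Qgrad_Qhomog_eq; split.
  split; last by move=> p k r xi Pr; apply: QhomogZ.
  by split; [exact: Qhomog_dsum | move=> p k r xi; apply: QhomogZ_sumLe].
move=> X Xg lsgX X' [subX' _] torX f linf homf.
have [g gf] := injQ subX' torX linf.
exists g; split=> //; first exact: extension_homogeneous homf gf.
by move=> h _ hf; apply: (extension_unique torX) => x X'x; rewrite hf ?gf.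
Qed.

End ModuleOfQuotients.

Unset Implicit Arguments.

Theorem mainTheorem8 (R : pzRingType) (Rg : int -> R -> Prop)
  (M : lmodType R) (Mg : int -> M -> Prop)
  (Q : lmodType R) (iota : {linear M -> Q}) :
  schematic Rg -> LSGmodule Rg Mg -> moduleOfQuotients Rg iota ->
  TclosedLSG Rg (Qgrad Rg Mg iota).
Proof.
move=> [[[dsR _ Rg1] Rg_pos] noethR [n [S [goodS [S_pos S_cover]]]]] lsgM quotQ.
have /fin_all_exists [ad adP] : forall i, exists ad : R * nat,
    [/\ S i ad.1, Rsecond Rg ad.2%:Z ad.1 & (0 < ad.2)%N].
  move=> i; have [x [Sx x_pos]] := S_pos i.
  by have [d d_gt0 Px] := good_sumGe1_homog (goodS i) dsR Sx x_pos; exists (x, d).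
pose a i := (ad i).1; pose d i := (ad i).2.
have [Sa homog_a d_gt0] : [/\ forall i, S i (a i), forall i, Rsecond Rg (d i)%:Z (a i)
    & forall i, (0 < d i)%N] by split=> i; case: (adP i).
exact: (Qgrad_Tclosed dsR Rg1 Rg_pos noethR goodS S_cover Sa homog_a d_gt0 lsgM quotQ).
Qed.
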